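(* Let $k\ge2$ and consider the edge reinforced random walk on the even cycle $\mathcal G_{2k}$ with weight function $W:\mathbb N\to(0,\infty)$ satisfying $\sum_{m\in\mathbb N}\frac1{W(m)}<\infty$, arbitrary initial edge weights $X_0^e\in\mathbb N$ and arbitrary starting vertex. Then almost surely at least one edge of $\mathcal G_{2k}$ is traversed only finitely often, i.e. $\mathbb P(\text{all edges of }\mathcal G_{2k}\text{ are traversed infinitely often})=0$.
   Context: $\mathbb N=\{0,1,2,\ldots\}$. For $l\ge 3$, the cycle $\mathcal G_l$ has vertices $\{0,1,\ldots,l-1\}$ and edges $e_i=\{i,i+1\}$, $i=0,\ldots,l-1$, with addition modulo $l$. Edge reinforced random walk (ERRW) on a connected graph $\mathcal G$ of bounded degree: given a weight function $W:\mathbb N\to(0,\infty)$, initial edge weights $X_0^e\in\mathbb N$, and a starting vertex $I_0=v_0$, the process $(I_n)_{n\ge0}$ with natural filtration $(\mathcal F_n)$ jumps at each step to a neighbour of its current vertex with $\mathbb P(I_{n+1}=v'\mid\mathcal F_n)1_{\{I_n=v\}}=\frac{W(X_n^{\{v,v'\}})}{\sum_{w\sim v}W(X_n^{\{v,w\}})}1_{\{I_n=v\sim v'\}}$, where $X_n^e=X_0^e+\sum_{j=0}^{n-1}1_{\{\{I_j,I_{j+1}\}=e\}}$. *)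

From Stdlib Require Import Reals List Arith.
Open Scope R_scope.

(* ERRW on the cycle G_l, vertices 0..l-1, edge e_i = {i, i+1 mod l}.
   From vertex v the two incident edges are e_v (leading to v+1) and
   e_{v-1} (leading to v-1), all mod l.  Since l >= 3 these are distinct
   and lead to distinct neighbours, so a trajectory of length M is encoded
   by its M directions. *)

Definition vnext (l v : nat) : nat := (v + 1) mod l.
Definition vprev (l v : nat) : nat := (v + l - 1) mod l.

Definition incr (X : nat -> nat) (e : nat) : nat -> nat :=
  fun i => if Nat.eqb i e then S (X i) else X i.

(* Expectation, under the ERRW law started at vertex v with edge-weight
   state X, of f(X_M), where X_M is the edge-weight function after M steps.
   This is the finite-dimensional law of (I_0,...,I_M) given by the
   transition probabilities W(X^{v,v'}) / sum_{w ~ v} W(X^{v,w}). *)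
Fixpoint errw_expect (W : nat -> R) (l : nat) (M : nat) (X : nat -> nat)
  (v : nat) (f : (nat -> nat) -> R) : R :=
  match M with
  | O => f X
  | S M' =>
      let ep := v in
      let em := vprev l v in
      let tot := W (X ep) + W (X em) in
      (W (X ep) / tot) * errw_expect W l M' (incr X ep) (vnext l v) f
      + (W (X em) / tot) * errw_expect W l M' (incr X em) (vprev l v) f
  end.

Definition all_edges_at_least (l N : nat) (X0 : nat -> nat)
  (X : nat -> nat) : R :=
  if forallb (fun i => Nat.leb N (X i - X0 i)) (seq 0 l) then 1 else 0.

Definition prob_all_edges_N_by_M (W : nat -> R) (l : nat) (X0 : nat -> nat)
  (v0 N M : nat) : R :=
  errw_expect W l M X0 v0 (all_edges_at_least l N X0).

(* Give edge [e] of the even cycle the sign [(-1)^e], so that the two edges at a vertex have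
   opposite signs. For real [t], the product over all edges [e] and all future reinforcement
   levels [X_e <= j < K] of [1 / (1 + i t sg e / W j)] is a bounded martingale of the walk: the edge
   taken from a vertex is chosen with probability proportional to [W], which exactly compensates
   the factor it removes. Summability of [1 / W] makes this martingale close to 1 once every edge
   has been crossed [N'] times with [N'] large, while for [t] large it has modulus at most [1/4]
   right after some edge is crossed for the [N]-th time. Optional stopping then bounds by [5/7]
   the probability to go on from there to [N'] crossings of every edge; iterating over [J]
   increasing levels gives the bound [(5/7)^J], uniformly in the time horizon. *)

From Stdlib Require Import Reals Lra Lia List.
From Coquelicot Require Import Coquelicot.
Open Scope R_scope.

Definition inv_1i (y : R) : C := Cinv (1, y).

Lemma Cmod_1i (y : R) : Cmod (1, y) = sqrt (1 + y ^ 2).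
Proof. unfold Cmod; simpl; f_equal; ring. Qed.

Lemma Cmod_1i_ge1 (y : R) : 1 <= Cmod (1, y).
Proof.
  rewrite Cmod_1i, <- sqrt_1 at 1. apply sqrt_le_1_alt. nra.
Qed.

Lemma neq_1i_0 (y : R) : (1, y) <> RtoC 0.
Proof. intros H. injection H. lra. Qed.

Lemma Cmod_inv_1i_le1 (y : R) : Cmod (inv_1i y) <= 1.
Proof.
  unfold inv_1i. rewrite Cmod_inv by apply neq_1i_0.
  pose proof (Cmod_1i_ge1 y).
  apply Rle_trans with (/ 1); [apply Rinv_le_contravar; lra | rewrite Rinv_1; lra].
Qed.

Lemma Cmod_inv_1i_sub1 (y : R) : Cmod (inv_1i y - 1) <= Rabs y.
Proof.
  assert (E : (inv_1i y - 1 = (0, Ropp y) * inv_1i y)%C).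
  { assert (0 < 1 + y * y) by nra.
    unfold inv_1i, Cinv; apply injective_projections; simpl; field; lra. }
  rewrite E, Cmod_mult.
  replace (Cmod (0, Ropp y)) with (Rabs y)
    by (unfold Cmod; simpl; rewrite <- sqrt_Rsqr_abs; f_equal; unfold Rsqr; ring).
  pose proof (Cmod_inv_1i_le1 y). pose proof (Cmod_ge_0 (inv_1i y)).
  pose proof (Rabs_pos y). nra.
Qed.

Lemma Cmod_inv_1i_large (y : R) : 4 <= Rabs y -> Cmod (inv_1i y) <= / 4.
Proof.
  intros Hy. unfold inv_1i. rewrite Cmod_inv by apply neq_1i_0.
  apply Rinv_le_contravar; [lra|].
  apply Rle_trans with (Rabs y); [exact Hy|].
  rewrite Cmod_1i, <- (sqrt_pow2 (Rabs y)) by apply Rabs_pos.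
  apply sqrt_le_1_alt. rewrite pow2_abs. lra.
Qed.

Lemma Re_le_Cmod (z : C) : Re z <= Cmod z.
Proof. pose proof (re_le_Cmod z). pose proof (Rle_abs (Re z)). lra. Qed.

Lemma Re_ge_1_sub_Cmod (z : C) : 1 - Cmod (z - 1) <= Re z.
Proof.
  pose proof (re_le_Cmod (z - 1)). pose proof (Rle_abs (- Re (z - 1))).
  rewrite Rabs_Ropp in *.
  replace (Re (z - 1)) with (Re z - 1) in * by (destruct z; simpl; ring). lra.
Qed.

Lemma upper_bound_lt (f : nat -> R) (n : nat) : exists B, forall i, (i < n)%nat -> f i <= B.
Proof.
  induction n as [|n [B HB]]; [exists 0; intros; lia|].
  exists (Rmax B (f n)). intros i Hi. destruct (Nat.eq_dec i n) as [->|Hne]; [apply Rmax_r|].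
  eapply Rle_trans; [apply HB; lia | apply Rmax_l].
Qed.

Lemma nat_upper_bound_lt (f : nat -> nat) (n : nat) :
  exists B, forall i, (i < n)%nat -> (f i <= B)%nat.
Proof.
  induction n as [|n [B HB]]; [exists 0%nat; intros; lia|].
  exists (max B (f n)). intros i Hi. destruct (Nat.eq_dec i n) as [->|Hne]; [lia|].
  specialize (HB i ltac:(lia)). lia.
Qed.

Fixpoint cprod (f : nat -> C) (n : nat) : C :=
  match n with O => 1 | S n => (cprod f n * f n)%C end.

Lemma Cmod_cprod_le1 (f : nat -> C) (n : nat) :
  (forall i, (i < n)%nat -> Cmod (f i) <= 1) -> Cmod (cprod f n) <= 1.
Proof.
  induction n as [|n IH]; intros Hf; simpl; [rewrite Cmod_1; lra|].
  rewrite Cmod_mult.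
  assert (Cmod (cprod f n) <= 1) by (apply IH; intros; apply Hf; lia).
  pose proof (Hf n ltac:(lia)). pose proof (Cmod_ge_0 (cprod f n)). pose proof (Cmod_ge_0 (f n)).
  nra.
Qed.

Lemma Cmod_cprod_le_factor (f : nat -> C) (n a : nat) :
  (forall i, (i < n)%nat -> Cmod (f i) <= 1) -> (a < n)%nat -> Cmod (cprod f n) <= Cmod (f a).
Proof.
  induction n as [|n IH]; intros Hf Ha; [lia|]. simpl. rewrite Cmod_mult.
  assert (Hle : Cmod (cprod f n) <= 1) by (apply Cmod_cprod_le1; intros; apply Hf; lia).
  pose proof (Hf n ltac:(lia)). pose proof (Cmod_ge_0 (cprod f n)). pose proof (Cmod_ge_0 (f n)).
  destruct (Nat.eq_dec a n) as [->|Hne]; [nra|].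
  assert (Cmod (cprod f n) <= Cmod (f a)) by (apply IH; [intros; apply Hf|]; lia).
  nra.
Qed.

Lemma Cmod_cprod_sub1 (f : nat -> C) (b : nat -> R) (n : nat) :
  (forall i, (i < n)%nat -> Cmod (f i) <= 1) ->
  (forall i, (i < n)%nat -> Cmod (f i - 1) <= b (S i) - b i) ->
  Cmod (cprod f n - 1) <= b n - b O.
Proof.
  induction n as [|n IH]; intros Hf Hb; simpl.
  - replace (RtoC 1 - 1)%C with (RtoC 0) by ring. rewrite Cmod_0. lra.
  - replace (cprod f n * f n - 1)%C with ((cprod f n - 1) * f n + (f n - 1))%C by ring.
    eapply Rle_trans; [apply Cmod_triangle|]. rewrite Cmod_mult.
    assert (Cmod (cprod f n - 1) <= b n - b O) by (apply IH; intros; [apply Hf|apply Hb]; lia).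
    pose proof (Hf n ltac:(lia)). pose proof (Hb n ltac:(lia)).
    pose proof (Cmod_ge_0 (cprod f n - 1)). pose proof (Cmod_ge_0 (f n)). nra.
Qed.

Lemma cprod_ext (f g : nat -> C) (n : nat) :
  (forall i, (i < n)%nat -> f i = g i) -> cprod f n = cprod g n.
Proof.
  induction n as [|n IH]; intros H; simpl; [reflexivity|].
  rewrite IH by (intros; apply H; lia). rewrite H by lia. reflexivity.
Qed.

Lemma cprod_update (f g : nat -> C) (c : C) (n a : nat) : (a < n)%nat ->
  (forall i, i <> a -> f i = g i) -> f a = (c * g a)%C -> cprod f n = (c * cprod g n)%C.
Proof.
  induction n as [|n IH]; intros Ha Hfg Hfa; [lia|]. simpl.
  destruct (Nat.eq_dec a n) as [->|Hne].
  - rewrite (cprod_ext f g n) by (intros; apply Hfg; lia). rewrite Hfa. ring.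
  - rewrite IH, (Hfg n) by (auto; lia). ring.
Qed.

Section Reinforcement.
Variable W : nat -> R.
Hypothesis W_pos : forall m, 0 < W m.
Variable Winv_sum : R.
Hypothesis Winv_sum_cv : Un_cv (fun n => sum_f_R0 (fun m => / W m) n) Winv_sum.
Variable k : nat.
Hypothesis k_pos : (1 <= k)%nat.
Variable X0 : nat -> nat.

Local Notation l := (2 * k)%nat.

Fixpoint sum_invW (n : nat) : R :=
  match n with O => 0 | S n => sum_invW n + / W n end.

Lemma sum_invW_mono (m n : nat) : (m <= n)%nat -> sum_invW m <= sum_invW n.
Proof.
  induction 1 as [|n _ IH]; simpl; [lra|].
  pose proof (Rinv_0_lt_compat _ (W_pos n)). lra.
Qed.

Lemma sum_invW_max_succ (j x : nat) :
  sum_invW (max (S j) x) - sum_invW (max j x) = if (x <=? j)%nat then / W j else 0.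
Proof.
  destruct (Nat.leb_spec x j).
  - rewrite !Nat.max_l by lia. simpl. ring.
  - rewrite !Nat.max_r by lia. ring.
Qed.

Lemma sum_invW_succ (n : nat) : sum_invW (S n) = sum_f_R0 (fun m => / W m) n.
Proof. induction n as [|n IH]; simpl in *; [ring|]. rewrite <- IH. simpl. ring. Qed.

Lemma sum_invW_le (n : nat) : sum_invW n <= Winv_sum.
Proof.
  apply Rle_trans with (sum_invW (S n)); [apply sum_invW_mono; lia|].
  rewrite sum_invW_succ. apply (growing_ineq _ _); [|exact Winv_sum_cv].
  intros m. rewrite <- !sum_invW_succ. apply sum_invW_mono. lia.
Qed.

Lemma sum_invW_tail (eps : R) : 0 < eps ->
  exists N, forall n, (N <= n)%nat -> Winv_sum - sum_invW n < eps.
Proof.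
  intros Heps. destruct (Winv_sum_cv eps Heps) as [N HN]. exists (S N). intros [|n] Hn; [lia|].
  specialize (HN n ltac:(lia)). unfold R_dist in HN. rewrite sum_invW_succ.
  pose proof (Rle_abs (- (sum_f_R0 (fun m => / W m) n - Winv_sum))). rewrite Rabs_Ropp in *. lra.
Qed.

Lemma vnext_lt (v : nat) : (vnext l v < l)%nat.
Proof. apply Nat.mod_upper_bound. lia. Qed.

Lemma vprev_lt (v : nat) : (vprev l v < l)%nat.
Proof. apply Nat.mod_upper_bound. lia. Qed.

Definition sg (e : nat) : R := if Nat.even e then 1 else -1.

Lemma Rabs_sg (e : nat) : Rabs (sg e) = 1.
Proof. unfold sg; destruct (Nat.even e); [apply Rabs_R1 | rewrite Rabs_left; lra]. Qed.

Lemma sg_vprev (v : nat) : (v < l)%nat -> sg (vprev l v) = - sg v.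
Proof.
  intros Hv. unfold vprev, sg. destruct v as [|v].
  - rewrite Nat.mod_small by lia.
    replace (0 + 2 * k - 1)%nat with (1 + 2 * (k - 1))%nat by lia.
    rewrite Nat.even_add_mul_2. simpl. ring.
  - replace (S v + 2 * k - 1)%nat with (v + 1 * (2 * k))%nat by lia.
    rewrite Nat.Div0.mod_add, Nat.mod_small, Nat.even_succ, <- Nat.negb_even by lia.
    destruct (Nat.even v); simpl; ring.
Qed.

Definition p_next (X : nat -> nat) (v : nat) : R := W (X v) / (W (X v) + W (X (vprev l v))).
Definition p_prev (X : nat -> nat) (v : nat) : R :=
  W (X (vprev l v)) / (W (X v) + W (X (vprev l v))).

Lemma p_next_prev (X : nat -> nat) (v : nat) :
  0 <= p_next X v /\ 0 <= p_prev X v /\ p_next X v + p_prev X v = 1.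
Proof.
  unfold p_next, p_prev. pose proof (W_pos (X v)). pose proof (W_pos (X (vprev l v))).
  repeat split.
  - apply Rmult_le_pos; [lra | left; apply Rinv_0_lt_compat; lra].
  - apply Rmult_le_pos; [lra | left; apply Rinv_0_lt_compat; lra].
  - field. lra.
Qed.

Lemma incr_eq (X : nat -> nat) (e : nat) : incr X e e = S (X e).
Proof. unfold incr. rewrite Nat.eqb_refl. reflexivity. Qed.

Lemma incr_neq (X : nat -> nat) (e i : nat) : i <> e -> incr X e i = X i.
Proof. intros H. unfold incr. destruct (Nat.eqb_spec i e); [contradiction | reflexivity]. Qed.

Lemma incr_bounds (X : nat -> nat) (e i : nat) : (X i <= incr X e i <= S (X i))%nat.
Proof. unfold incr. destruct (Nat.eqb i e); lia. Qed.

Definition mart_factor (t : R) (X : nat -> nat) (e j : nat) : C :=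
  if (X e <=? j)%nat then inv_1i (t * sg e / W j) else 1.

Definition mart (t : R) (K : nat) (X : nat -> nat) : C :=
  cprod (fun e => cprod (mart_factor t X e) K) l.

Lemma mart_incr (t : R) (K : nat) (X : nat -> nat) (a : nat) : (a < l)%nat -> (X a < K)%nat ->
  mart t K (incr X a) = Cmult (1, t * sg a / W (X a)) (mart t K X).
Proof.
  intros Ha HK. set (y := t * sg a / W (X a)).
  assert (E : mart t K X = (inv_1i y * mart t K (incr X a))%C).
  { apply cprod_update with a; [exact Ha | |].
    { intros e He. unfold mart_factor. rewrite incr_neq by exact He. reflexivity. }
    apply cprod_update with (X a); [exact HK | |].
    - intros j Hj. unfold mart_factor. rewrite incr_eq.
      destruct (Nat.leb_spec (X a) j), (Nat.leb_spec (S (X a)) j); reflexivity || lia.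
    - unfold mart_factor. rewrite incr_eq, Nat.leb_refl. replace (S (X a) <=? X a)%nat with false
        by (symmetry; apply Nat.leb_gt; lia). symmetry; apply Cmult_1_r. }
  rewrite E, Cmult_assoc. unfold inv_1i. rewrite Cinv_r by apply neq_1i_0. ring.
Qed.

(* The factors [1 + i t sg v / W (X v)] and [1 - i t sg v / W (X (vprev l v))] average to 1
   because [p_next X v / W (X v) = p_prev X v / W (X (vprev l v))]. *)
Lemma Re_mart_harmonic (t : R) (K : nat) (X : nat -> nat) (v : nat) :
  (v < l)%nat -> (X v < K)%nat -> (X (vprev l v) < K)%nat ->
  Re (mart t K X) =
  p_next X v * Re (mart t K (incr X v)) + p_prev X v * Re (mart t K (incr X (vprev l v))).
Proof.
  intros Hv Hn Hp.
  rewrite (mart_incr t K X v), (mart_incr t K X (vprev l v)), sg_vprev by auto using vprev_lt.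
  destruct (mart t K X) as [g1 g2]. unfold p_next, p_prev, Re, Cmult; cbn [fst snd].
  pose proof (W_pos (X v)). pose proof (W_pos (X (vprev l v))).
  field. repeat split; lra.
Qed.

Lemma Cmod_mart_factor_le1 (t : R) (X : nat -> nat) (e j : nat) :
  Cmod (mart_factor t X e j) <= 1.
Proof.
  unfold mart_factor. destruct (X e <=? j)%nat; [apply Cmod_inv_1i_le1 | rewrite Cmod_1; lra].
Qed.

Lemma Cmod_mart_le1 (t : R) (K : nat) (X : nat -> nat) : Cmod (mart t K X) <= 1.
Proof. apply Cmod_cprod_le1; intros; apply Cmod_cprod_le1; intros; apply Cmod_mart_factor_le1. Qed.

Lemma Re_mart_bounds (t : R) (K : nat) (X : nat -> nat) : -1 <= Re (mart t K X) <= 1.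
Proof.
  pose proof (re_le_Cmod (mart t K X)). pose proof (Cmod_mart_le1 t K X).
  apply Rabs_le_between. lra.
Qed.

Lemma Cmod_mart_le_quarter (t : R) (K : nat) (X : nat -> nat) (e : nat) :
  (e < l)%nat -> (X e < K)%nat -> 4 * W (X e) <= t -> Cmod (mart t K X) <= / 4.
Proof.
  intros He HK Ht.
  assert (Hfac : Cmod (mart_factor t X e (X e)) <= / 4).
  { unfold mart_factor. rewrite Nat.leb_refl. apply Cmod_inv_1i_large.
    pose proof (W_pos (X e)).
    unfold Rdiv. rewrite !Rabs_mult, Rabs_sg, Rabs_inv, (Rabs_pos_eq (W (X e))) by lra.
    apply Rmult_le_reg_r with (W (X e)); [lra|].
    rewrite Rmult_1_r, Rmult_assoc, Rinv_l by lra. pose proof (Rle_abs t). lra. }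
  eapply Rle_trans; [|exact Hfac].
  eapply Rle_trans; [apply Cmod_cprod_le_factor with (a := e); [|exact He]|].
  - intros; apply Cmod_cprod_le1; intros; apply Cmod_mart_factor_le1.
  - apply Cmod_cprod_le_factor; [intros; apply Cmod_mart_factor_le1 | exact HK].
Qed.

Lemma Re_mart_ge (t : R) (K N : nat) (X : nat -> nat) : 0 <= t ->
  (forall e, (e < l)%nat -> (N <= X e)%nat) ->
  1 - INR l * (t * (Winv_sum - sum_invW N)) <= Re (mart t K X).
Proof.
  intros Ht HN. eapply Rle_trans; [|apply Re_ge_1_sub_Cmod].
  apply Rplus_le_compat_l, Ropp_le_contravar.
  set (B := t * (Winv_sum - sum_invW N)).
  replace (INR l * B) with (INR l * B - INR 0 * B) by (simpl; ring).
  apply (Cmod_cprod_sub1 _ (fun e => INR e * B)).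
  - intros; apply Cmod_cprod_le1; intros; apply Cmod_mart_factor_le1.
  - intros e He. rewrite S_INR.
    eapply Rle_trans.
    + apply Cmod_cprod_sub1 with (b := fun j => t * sum_invW (max j (X e))).
      * intros; apply Cmod_mart_factor_le1.
      * intros j _. rewrite <- Rmult_minus_distr_l, sum_invW_max_succ.
        unfold mart_factor. destruct (X e <=? j)%nat.
        -- eapply Rle_trans; [apply Cmod_inv_1i_sub1|]. pose proof (W_pos j).
           unfold Rdiv. rewrite !Rabs_mult, Rabs_sg, Rabs_inv, !Rabs_pos_eq by lra. lra.
        -- replace (RtoC 1 - 1)%C with (RtoC 0) by ring. rewrite Cmod_0. lra.
    + rewrite Nat.max_0_l. pose proof (sum_invW_le (max K (X e))).
      pose proof (sum_invW_mono N (X e) (HN e He)). unfold B. nra.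
Qed.

Definition edges_at_least (N : nat) (X : nat -> nat) : bool :=
  forallb (fun i => N <=? X i - X0 i) (seq 0 l).

Lemma edges_at_least_spec (N : nat) (X : nat -> nat) :
  edges_at_least N X = true <-> forall e, (e < l)%nat -> (N <= X e - X0 e)%nat.
Proof.
  unfold edges_at_least. rewrite forallb_forall. split.
  - intros H e He. apply Nat.leb_le, H, in_seq. lia.
  - intros H e He. apply in_seq in He. apply Nat.leb_le, H. lia.
Qed.

Lemma edges_at_least_incr (N : nat) (X : nat -> nat) (a : nat) :
  edges_at_least N X = true -> edges_at_least N (incr X a) = true.
Proof.
  rewrite !edges_at_least_spec. intros H e He.
  specialize (H e He). pose proof (incr_bounds X a e). lia.
Qed.

Lemma edges_at_least_anti (N N' : nat) (X : nat -> nat) :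
  (N <= N')%nat -> edges_at_least N' X = true -> edges_at_least N X = true.
Proof. rewrite !edges_at_least_spec. intros HN H e He. specialize (H e He). lia. Qed.

Lemma edges_at_least_entry (N : nat) (X : nat -> nat) (a : nat) : (a < l)%nat ->
  edges_at_least N X = false -> edges_at_least N (incr X a) = true -> incr X a a = (X0 a + N)%nat.
Proof.
  intros Ha HX HY. rewrite edges_at_least_spec in HY. pose proof (HY a Ha) as HYa.
  rewrite incr_eq in *.
  destruct (Nat.le_gt_cases N (X a - X0 a)) as [HN|HN]; [|lia].
  enough (edges_at_least N X = true) by congruence.
  apply edges_at_least_spec. intros e He. destruct (Nat.eq_dec e a) as [->|Hne]; [exact HN|].
  rewrite <- (incr_neq X a e Hne). apply HY, He.
Qed.

Definition superharmonic (K : nat) (H : (nat -> nat) -> R) : Prop :=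
  forall X v, (v < l)%nat -> (forall e, (e < l)%nat -> (S (X e) < K)%nat) ->
  p_next X v * H (incr X v) + p_prev X v * H (incr X (vprev l v)) <= H X.

Lemma errw_expect_le (K : nat) (H f : (nat -> nat) -> R) :
  superharmonic K H -> (forall Y, f Y <= H Y) ->
  forall M X v, (v < l)%nat -> (forall e, (e < l)%nat -> (X e + M < K)%nat) ->
  errw_expect W l M X v f <= H X.
Proof.
  intros Hsup Hf M. induction M as [|M IH]; intros X v Hv HK; [apply Hf|].
  cbn [errw_expect]. fold (p_next X v) (p_prev X v).
  destruct (p_next_prev X v) as [Hn [Hp _]].
  eapply Rle_trans; [|apply (Hsup X v Hv); intros e He; specialize (HK e He); lia].
  apply Rplus_le_compat; apply Rmult_le_compat_l; auto; apply IH; auto using vnext_lt, vprev_lt;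
    intros e He; pose proof (incr_bounds X v e); pose proof (incr_bounds X (vprev l v) e);
    specialize (HK e He); lia.
Qed.

(* [H X] bounds the probability, started from [X] and as long as no edge count reaches [K], to
   cross level [N'] on every edge; it is at most [q] right after some edge is crossed for the
   [N]-th time. *)
Record crossing_majorant (N N' K : nat) (q : R) (H : (nat -> nat) -> R) : Prop := {
  majorant_nonneg : forall X, 0 <= H X;
  majorant_ge1 : forall X, edges_at_least N' X = true -> 1 <= H X;
  majorant_superharmonic : superharmonic K H;
  majorant_entry : forall X e, (e < l)%nat -> X e = (X0 e + N)%nat -> (X e < K)%nat -> H X <= q }.

Lemma crossing_majorant_const (N K : nat) : crossing_majorant N N K 1 (fun _ => 1).
Proof.
  split; intros; try lra.
  intros X v _ _. destruct (p_next_prev X v) as [_ [_ Hs]]. lra.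
Qed.

(* Below level [N'] the affine function [4/7 q (1 + Re mart)] of the martingale takes over: it is
   at least [q] where [N'] is first reached on all edges ([Re mart >= 3/4]) and at most [5/7 q]
   right after the [N]-th crossing of an edge ([|mart| <= 1/4]). *)
Lemma crossing_majorant_extend (N N' N'' K : nat) (q t : R) (H : (nat -> nat) -> R) :
  (N < N')%nat -> (N' <= N'')%nat -> 0 <= q ->
  (forall e, (e < l)%nat -> 4 * W (X0 e + N) <= t) ->
  (forall X, edges_at_least N' X = true -> 3/4 <= Re (mart t K X)) ->
  crossing_majorant N' N'' K q H ->
  crossing_majorant N N'' K (5/7 * q)
    (fun X => if edges_at_least N' X then H X else 4/7 * q * (1 + Re (mart t K X))).
Proof.
  intros HNN' HN'N'' Hq Ht Hnear HH. destruct HH as [H0 H1 Hsup Hentry].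
  split.
  - intros X. destruct (edges_at_least N' X); [apply H0|].
    pose proof (Re_mart_bounds t K X). nra.
  - intros X HX. rewrite (edges_at_least_anti N' N'' X HN'N'' HX). apply H1, HX.
  - intros X v Hv HK. destruct (edges_at_least N' X) eqn:EX.
    { rewrite !edges_at_least_incr by exact EX. apply Hsup; assumption. }
    assert (Hle : forall a, (a < l)%nat ->
      (if edges_at_least N' (incr X a) then H (incr X a)
       else 4/7 * q * (1 + Re (mart t K (incr X a)))) <= 4/7 * q * (1 + Re (mart t K (incr X a)))).
    { intros a Ha. destruct (edges_at_least N' (incr X a)) eqn:EY; [|lra].
      pose proof (Hnear _ EY).
      apply Rle_trans with q; [|nra].
      apply (Hentry _ a Ha (edges_at_least_entry N' X a Ha EX EY)).
      rewrite incr_eq. apply HK, Ha. }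
    pose proof (Hle v Hv). pose proof (Hle _ (vprev_lt v)).
    destruct (p_next_prev X v) as [Hn [Hp Hs]].
    rewrite (Re_mart_harmonic t K X v Hv) by (apply Nat.lt_succ_l, HK; auto using vprev_lt).
    nra.
  - intros X e He HXe HK. destruct (edges_at_least N' X) eqn:EX.
    { rewrite edges_at_least_spec in EX. specialize (EX e He). lia. }
    pose proof (Cmod_mart_le_quarter t K X e He HK ltac:(rewrite HXe; apply Ht, He)).
    pose proof (Re_le_Cmod (mart t K X)). nra.
Qed.

Lemma crossing_majorant_step (N : nat) : exists N', (N < N')%nat /\
  forall N'' K q H, (N' <= N'')%nat -> 0 <= q -> crossing_majorant N' N'' K q H ->
  exists H', crossing_majorant N N'' K (5/7 * q) H'.
Proof.
  destruct (upper_bound_lt (fun e => 4 * W (X0 e + N)) l) as [t Ht].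
  assert (Ht_pos : 0 < t) by (pose proof (W_pos (X0 0 + N)); pose proof (Ht 0%nat ltac:(lia)); lra).
  assert (Hl : 0 < INR l) by (apply lt_0_INR; lia).
  destruct (sum_invW_tail (/ (4 * INR l * t))) as [N1 HN1];
    [apply Rinv_0_lt_compat; nra|].
  exists (N1 + N + 1)%nat. split; [lia|]. intros N'' K q H HN'' Hq HH.
  eexists. apply (crossing_majorant_extend N (N1 + N + 1) N'' K q t H); auto; [lia|].
  intros X HX. rewrite edges_at_least_spec in HX.
  eapply Rle_trans;
    [|apply (Re_mart_ge t K (N1 + N + 1)); [lra | intros e He; specialize (HX e He); lia]].
  specialize (HN1 (N1 + N + 1)%nat ltac:(lia)).
  assert (INR l * (t * (Winv_sum - sum_invW (N1 + N + 1))) <= INR l * (t * / (4 * INR l * t))).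
  { apply Rmult_le_compat_l; [lra|]. apply Rmult_le_compat_l; lra. }
  replace (INR l * (t * / (4 * INR l * t))) with (/ 4) in * by (field; lra). lra.
Qed.

Lemma crossing_majorant_exists (J N : nat) : exists N'', (N <= N'')%nat /\
  forall K, exists H, crossing_majorant N N'' K ((5/7) ^ J) H.
Proof.
  revert N. induction J as [|J IH]; intros N.
  - exists N. split; [lia|]. intros K. exists (fun _ => 1). apply crossing_majorant_const.
  - destruct (crossing_majorant_step N) as [N' [HNN' Hstep]].
    destruct (IH N') as [N'' [HN'N'' HH]].
    exists N''. split; [lia|]. intros K. destruct (HH K) as [H HH'].
    apply (Hstep N'' K _ H HN'N''); [apply pow_le; lra | exact HH'].
Qed.

End Reinforcement.

Theorem mainTheorem3 (k : nat) (hk : (2 <= k)%nat)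
  (W : nat -> R) (hWpos : forall m, 0 < W m)
  (hWsum : exists S, Un_cv (fun n => sum_f_R0 (fun m => / W m) n) S)
  (X0 : nat -> nat) (v0 : nat) (hv0 : (v0 < 2 * k)%nat) :
  forall eps, 0 < eps ->
  exists N : nat, forall M : nat,
    prob_all_edges_N_by_M W (2 * k) X0 v0 N M <= eps.
Proof.
  intros eps Heps. destruct hWsum as [Winv_sum HWinv].
  destruct (pow_lt_1_zero (5/7) ltac:(rewrite Rabs_pos_eq; lra) eps Heps) as [J HJ].
  specialize (HJ J (le_n J)). rewrite Rabs_pos_eq in HJ by (apply pow_le; lra).
  destruct (crossing_majorant_exists W hWpos Winv_sum HWinv k ltac:(lia) X0 J 0)
    as [N [_ HH]].
  exists N. intros M.
  destruct (nat_upper_bound_lt X0 (2 * k)) as [B HB].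
  destruct (HH (B + M + 1)%nat) as [H [H0 H1 Hsup Hentry]].
  apply Rle_trans with (H X0); [|apply Rle_trans with ((5/7) ^ J); [|lra]].
  - apply (errw_expect_le W hWpos k ltac:(lia) (B + M + 1) H); auto.
    + intros Y. unfold all_edges_at_least. fold (edges_at_least k X0 N Y).
      destruct (edges_at_least k X0 N Y) eqn:E; [apply H1, E | apply H0].
    + intros e He. specialize (HB e He). lia.
  - apply (Hentry X0 0%nat); [lia | lia | specialize (HB 0%nat ltac:(lia)); lia].
Qed.
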